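(* For every instance $(A,C,k)$, there exists a committee satisfying EJR+ whose representation ratio is at least $\frac34-\frac{2}{\sqrt{k}}$ and whose utilitarian ratio is at least $\frac{2}{\sqrt{k}}-\frac1k$.
   Context: An instance $(A,C,k)$ consists of a finite nonempty candidate set $C$, voters $N=\{1,\dots,n\}$, approval sets $A_i\subseteq C$, and a committee size $1\le k\le|C|$. A committee is $W\subseteq C$ with $|W|\le k$. $\mathrm{sw}(W)=\sum_i|A_i\cap W|$ and $\mathrm{cov}(W)=|\{i:A_i\cap W\ne\emptyset\}|$; the utilitarian ratio is $\mathrm{sw}(W)/\max\{\mathrm{sw}(W'):|W'|=k\}$ and the representation ratio is $\mathrm{cov}(W)/\max\{\mathrm{cov}(W'):|W'|=k\}$. $W$ satisfies EJR+ if for every $\ell\in\{1,\dots,k\}$ and every $N'\subseteq N$ with $|N'|\ge\ell n/k$ and $\bigcap_{i\in N'}A_i\ne\emptyset$, either some $i\in N'$ has $|A_i\cap W|\ge\ell$ or $\bigcap_{i\in N'}A_i\subseteq W$. *)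

From mathcomp Require Import all_boot all_order all_algebra.
Set Implicit Arguments. Unset Strict Implicit. Unset Printing Implicit Defensive.
Import Order.TTheory GRing.Theory Num.Theory.

Section ABC.
Variables (C : finType) (n : nat) (A : 'I_n -> {set C}).

Definition sw (W : {set C}) : nat := \sum_(i < n) #|A i :&: W|.

Definition cov (W : {set C}) : nat := #|[set i : 'I_n | A i :&: W != set0]|.

Definition max_sw (k : nat) : nat := \max_(W : {set C} | #|W| == k) sw W.
Definition max_cov (k : nat) : nat := \max_(W : {set C} | #|W| == k) cov W.

Definition EJRplus (k : nat) (W : {set C}) : Prop :=
  forall (l : nat) (N' : {set 'I_n}),
    1 <= l <= k ->
    l * n <= #|N'| * k ->
    (\bigcap_(i in N') A i) != set0 ->
    (exists2 i, i \in N' & l <= #|A i :&: W|) \/ (\bigcap_(i in N') A i) \subset W.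
End ABC.

Definition ratio (R : numFieldType) (a b : nat) : R :=
  (if b == 0%N then 1 else a%:R / b%:R)%R.

Definition util_ratio (R : numFieldType) (C : finType) (n : nat)
  (A : 'I_n -> {set C}) (k : nat) (W : {set C}) : R := ratio R (sw A W) (max_sw A k).
Definition repr_ratio (R : numFieldType) (C : finType) (n : nat)
  (A : 'I_n -> {set C}) (k : nat) (W : {set C}) : R := ratio R (cov A W) (max_cov A k).

From Pilot Require Import Defs.
From mathcomp Require Import all_boot all_order all_algebra.
From mathcomp Require Import zify ring lra.
Import Order.TTheory GRing.Theory Num.Theory.
Set Implicit Arguments. Unset Strict Implicit. Unset Printing Implicit Defensive.

(* Let T be a largest block of top-scored candidates, each approved by at least |T| n / k
   voters, and run the greedy justified candidate rule from T: for l = k, ..., 1, keep adding a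
   candidate approved by at least l n / k voters who have fewer than l approved members.  The
   resulting core W0 and all its supersets satisfy EJR+.  Let the approvers of each member of T
   pay for it in equal shares, and the voters justifying each later member pay for it in equal
   shares: no voter pays more than k / n, so |W0| <= k and cov(W0) >= |W0| n / k.
   If |W0| >= (3/4 - 2/sqrt k) k, complete W0 with the highest-scored candidates: coverage comes
   from the payments, welfare from comparing with an optimum, the members of W0 that score
   below the best unelected candidate being few, again by the payments.  Otherwise add about
   2 sqrt k of the best members of a welfare-optimal committee, and fill the remaining seats with
   the members of a coverage-optimal committee that newly cover the most voters. *)

Section Scores.
Variables (C : finType) (n : nat) (A : 'I_n -> {set C}).

Definition score (c : C) : nat := #|[set i | c \in A i]|.
Definition utility (i : 'I_n) (W : {set C}) : nat := #|A i :&: W|.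

Lemma utility_sum i (W : {set C}) : utility i W = \sum_(c in W) (c \in A i).
Proof.
rewrite /utility -sum1_card big_mkcond [RHS]big_mkcond /=.
by apply: eq_bigr => c _; rewrite inE; case: (c \in A i); case: (c \in W).
Qed.

Lemma score_sum c : score c = \sum_i (c \in A i).
Proof. by rewrite /score -sum1_card big_mkcond; apply: eq_bigr => i _; rewrite inE. Qed.

Lemma sw_score_sum (W : {set C}) : sw A W = \sum_(c in W) score c.
Proof.
rewrite /sw (eq_bigr _ (fun i _ => utility_sum i W)) exchange_big /=.
by apply: eq_bigr => c _; rewrite score_sum.
Qed.

Lemma score_le_n c : score c <= n.
Proof. by apply: leq_trans (max_card _) _; rewrite card_ord. Qed.

Lemma cov_le_n (W : {set C}) : cov A W <= n.
Proof. by apply: leq_trans (max_card _) _; rewrite card_ord. Qed.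

Lemma subset_leq_utility i (W W' : {set C}) : W \subset W' -> utility i W <= utility i W'.
Proof. by move=> sWW'; rewrite subset_leq_card ?setIS. Qed.

Lemma subset_leq_sw (W W' : {set C}) : W \subset W' -> sw A W <= sw A W'.
Proof. by move=> sWW'; apply: leq_sum => i _; apply: subset_leq_utility. Qed.

Lemma subset_leq_cov (W W' : {set C}) : W \subset W' -> cov A W <= cov A W'.
Proof.
move=> sWW'; apply/subset_leq_card/subsetP => i; rewrite !inE.
by apply: contraNneq => AW'0; rewrite -subset0 -AW'0 setIS.
Qed.

End Scores.

Section Saturation.
Variables (C : finType) (n : nat) (A : 'I_n -> {set C}) (k : nat).

Definition deprived (W : {set C}) (c : C) (l : nat) : {set 'I_n} :=
  [set i | (c \in A i) && (utility A i W < l)].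

Definition eligible (W : {set C}) (c : C) (l : nat) : bool :=
  (c \notin W) && (l * n <= #|deprived W c l| * k).

Definition saturated (W : {set C}) (l : nat) : Prop :=
  forall l' c, l < l' -> l' <= k -> ~~ eligible W c l'.

Lemma deprived_subset (W W' : {set C}) c l :
  W \subset W' -> deprived W' c l \subset deprived W c l.
Proof.
move=> sWW'; apply/subsetP => i; rewrite !inE => /andP[-> ltl] /=.
exact: leq_ltn_trans (subset_leq_utility A i sWW') ltl.
Qed.

Lemma eligible_subset (W W' : {set C}) c l :
  W \subset W' -> eligible W' c l -> eligible W c l.
Proof.
move=> sWW' /andP[cW' quota]; rewrite /eligible (contra (subsetP sWW' c)) //=.
by rewrite (leq_trans quota) // leq_mul2r subset_leq_card ?orbT ?deprived_subset.
Qed.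

Lemma saturated_subset (W W' : {set C}) l :
  W \subset W' -> saturated W l -> saturated W' l.
Proof.
by move=> sWW' satW l' c ltl' lek; apply: contraNN (satW l' c ltl' lek); apply: eligible_subset.
Qed.

Lemma saturated0_EJRplus (W : {set C}) : saturated W 0 -> EJRplus A k W.
Proof.
move=> satW l N' /andP[l_gt0 lek] quota capN'.
have [|/subsetPn[c capc cW]] := boolP (\bigcap_(i in N') A i \subset W); first by right.
left; apply/exists_inP; apply: contraR (satW l c l_gt0 lek) => /exists_inPn poor.
rewrite /eligible cW (leq_trans quota) // leq_mul2r subset_leq_card ?orbT //.
apply/subsetP => i iN'; rewrite inE (bigcapP capc) //= ltnNge; exact: poor.
Qed.

End Saturation.

Section QuotaBlock.
Variables (C : finType) (n : nat) (A : 'I_n -> {set C}) (k : nat).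

Definition top_scored (T : {set C}) : bool :=
  [forall c in T, forall c' in ~: T, score A c' <= score A c].

Lemma top_scored_le (T : {set C}) c c' :
  top_scored T -> c \in T -> c' \notin T -> score A c' <= score A c.
Proof.
by move=> /forall_inP/(_ c) topT cT c'T; move/forall_inP: (topT cT) => /(_ c'); rewrite inE; apply.
Qed.

Definition quota_block (T : {set C}) : bool :=
  [&& #|T| <= k, top_scored T & [forall c in T, #|T| * n <= score A c * k]].

Lemma quota_blockU1 (T : {set C}) c :
  quota_block T -> #|T| < k -> c \notin T -> (forall c', c' \notin T -> score A c' <= score A c) ->
  #|T|.+1 * n <= score A c * k -> quota_block (c |: T).
Proof.
move=> /and3P[_ topT _] ltTk cT cmax quotac.
have cT_le c' : c' \in T -> score A c <= score A c' by move=> c'T; apply: top_scored_le topT c'T cT.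
rewrite /quota_block cardsU1 cT ltTk /=; apply/andP; split.
  apply/forall_inP => d; rewrite !inE => /orP[/eqP->|dT]; apply/forall_inP => d';
    rewrite !inE negb_or => /andP[_ d'T]; [exact: cmax | exact: top_scored_le topT dT d'T].
apply/forall_inP => d; rewrite !inE => /orP[/eqP-> //|dT].
by rewrite (leq_trans quotac) // leq_mul2r cT_le ?orbT.
Qed.

Lemma exists_maximal_quota_block : exists T : {set C},
  [/\ #|T| <= k, top_scored T, (forall c, c \in T -> #|T| * n <= score A c * k) &
      (#|T| < k -> forall c, c \notin T -> score A c * k < #|T|.+1 * n)].
Proof.
have block0 : quota_block set0.
  by rewrite /quota_block cards0 /=; apply/andP; split; apply/forall_inP => c; rewrite inE.
have [T blockT Tmax] := @arg_maxnP _ set0 quota_block (fun T : {set C} => #|T|) block0.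
have /and3P[Tk topT /forall_inP quotaT] := blockT.
exists T; split=> // ltTk c0 c0T; rewrite ltnNge; apply/negP => quota0.
have [|c1 c1T c1max] := @arg_maxnP _ c0 (fun c => c \notin T) (score A) => //.
have c1quota : #|T|.+1 * n <= score A c1 * k.
  exact: leq_trans quota0 (leq_mul (c1max c0 c0T) (leqnn k)).
have := Tmax _ (quota_blockU1 blockT ltTk c1T c1max c1quota).
by rewrite cardsU1 c1T /= ltnn.
Qed.

End QuotaBlock.

Section Subsets.
Variable C : finType.

Lemma exists_subset_card (X : {set C}) r :
  r <= #|X| -> exists2 Y : {set C}, Y \subset X & #|Y| = r.
Proof.
case/card_geqP=> s [s_uniq size_s sX]; exists [set x in s].
  by apply/subsetP => x; rewrite inE; apply: sX.
by rewrite cardsE (card_uniqP s_uniq).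
Qed.

Lemma exists_heavy_subset (f : C -> nat) (X : {set C}) r : r <= #|X| ->
  exists Y : {set C},
    [/\ Y \subset X, #|Y| = r & r * \sum_(c in X) f c <= #|X| * \sum_(c in Y) f c].
Proof.
elim: {X}_.+1 {-2}X (ltnSn #|X|) r => // K IHK X sizeX r.
rewrite leq_eqVlt => /predU1P[->|lt_rX]; first by exists X.
have [c0 c0X] : {c0 | c0 \in X} by apply/sigW/card_gt0P; apply: leq_ltn_trans lt_rX.
have [m mX m_min] := arg_minnP f c0X; have {}mX : m \in X := mX.
have sizeXm : #|X :\ m| = #|X|.-1 by rewrite (cardsD1 m X) mX.
have [Y [YXm sizeY heavyY]] := IHK (X :\ m) ltac:(rewrite sizeXm; lia) r ltac:(rewrite sizeXm; lia).
exists Y; split=> //; first exact: subset_trans YXm (subsetDl _ _).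
have low_m : #|X|.-1 * f m <= \sum_(c in X :\ m) f c.
  by rewrite -sizeXm -sum_nat_const leq_sum // => c /setD1P[_ /m_min].
rewrite (big_setD1 m mX) /=; rewrite sizeXm in heavyY.
have [K' sizeXK'] : {K' | #|X| = K'.+1} by exists #|X|.-1; rewrite prednK //; lia.
have [->|r_gt0] := posnP r; first by rewrite mul0n.
rewrite sizeXK' /= in low_m heavyY *; rewrite -(leq_pmul2l (_ : 0 < K')); [nia | lia].
Qed.

End Subsets.

Section Committees.
Variables (C : finType) (n : nat) (A : 'I_n -> {set C}) (k : nat).

Lemma exists_optimal_committee (F : {set C} -> nat) : k <= #|C| ->
  exists2 W : {set C}, #|W| = k & \max_(W' : {set C} | #|W'| == k) F W' = F W.
Proof.
move=> le_kC; have [W0 _ sizeW0] := @exists_subset_card _ [set: C] k ltac:(by rewrite cardsT).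
have nonempty : 0 < #|[pred W : {set C} | #|W| == k]|.
  by apply/card_gt0P; exists W0; rewrite inE sizeW0.
have [W /eqP sizeW ->] := eq_bigmax_cond F nonempty.
by exists W.
Qed.

Lemma exists_welfare_subset r : r <= k -> k <= #|C| ->
  exists2 U : {set C}, #|U| = r & r * max_sw A k <= k * sw A U.
Proof.
move=> le_rk le_kC; rewrite /max_sw; have [W sizeW ->] := exists_optimal_committee (sw A) le_kC.
have [U [_ sizeU heavyU]] := @exists_heavy_subset _ (score A) W r ltac:(by rewrite sizeW).
by exists U; rewrite // !sw_score_sum -sizeW.
Qed.

Lemma max_sw_le_threshold (B : {set C}) s : #|B| <= k ->
  (forall d, d \in B -> s <= score A d) -> (forall c, c \notin B -> score A c <= s) ->
  max_sw A k <= \sum_(d in B) score A d + (k - #|B|) * s.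
Proof.
move=> le_Bk heavy light; apply/bigmax_leqP => W /eqP sizeW.
rewrite sw_score_sum (big_setID B) /= (big_setID (A := B) W) /= [W :&: B]setIC.
have lightW : \sum_(c in W :\: B) score A c <= #|W :\: B| * s.
  by rewrite -sum_nat_const leq_sum // => c /setDP[_ /light].
have heavyB : #|B :\: W| * s <= \sum_(d in B :\: W) score A d.
  by rewrite -sum_nat_const leq_sum // => d /setDP[/heavy].
have := cardsID B W; have := cardsID W B; rewrite sizeW [W :&: B]setIC; nia.
Qed.

Definition score_fill (W0 W : {set C}) : Prop :=
  forall d c, d \in W :\: W0 -> c \notin W -> score A c <= score A d.

Lemma exists_score_fill (W0 : {set C}) : #|W0| <= k -> k <= #|C| ->
  exists W : {set C}, [/\ W0 \subset W, #|W| = k & score_fill W0 W].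
Proof.
move=> le_W0k le_kC.
have [Y YW0 sizeY] := @exists_subset_card _ (~: W0) (k - #|W0|) ltac:(by rewrite cardsCs; lia).
have fill0 : (W0 \subset W0 :|: Y) && (#|W0 :|: Y| == k).
  rewrite subsetUl cardsU (_ : W0 :&: Y = set0) ?cards0 ?sizeY; first by apply/eqP; lia.
  by apply/setP => c; rewrite !inE; apply/andP => -[cW0 /(subsetP YW0)]; rewrite inE cW0.
have [W /andP[W0W /eqP sizeW] Wmax] :=
  @arg_maxnP _ _ (fun W : {set C} => (W0 \subset W) && (#|W| == k)) (sw A) fill0.
exists W; split=> // d c /setDP[dW dW0] cW; rewrite leqNgt; apply/negP => lt_dc.
have swap : (W0 \subset c |: (W :\ d)) && (#|c |: (W :\ d)| == k).
  rewrite cardsU1 inE negb_and cW orbT (cardsD1 d W) dW in sizeW *.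
  rewrite add1n -sizeW eqxx andbT; apply/subsetP => e eW0; rewrite !inE (subsetP W0W) //.
  by rewrite andbT orbC; case: eqP eW0 dW0 => // -> ->.
have := Wmax _ swap; rewrite /= !sw_score_sum (big_setD1 d dW) big_setU1 /=;
  last by rewrite !inE negb_and cW orbT.
by rewrite leq_add2r leqNgt lt_dc.
Qed.

Lemma max_cov_le_n : max_cov A k <= n.
Proof. by apply/bigmax_leqP => W _; apply: cov_le_n. Qed.

Lemma cov_sum (W : {set C}) : cov A W = \sum_i (A i :&: W != set0).
Proof. by rewrite /cov -sum1_card big_mkcond; apply: eq_bigr => i _; rewrite inE. Qed.

Section MarginalCoverage.
Variables W0 Wc : {set C}.

Definition owner (i : 'I_n) : option C := [pick c in A i :&: Wc].

Definition gain (c : C) : nat := \sum_i ((A i :&: W0 == set0) && (owner i == Some c)).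

Definition owned_in (Y : {set C}) (i : 'I_n) : bool :=
  if owner i is Some c then c \in Y else false.

Lemma sum_gain (Y : {set C}) :
  \sum_(c in Y) gain c = \sum_i ((A i :&: W0 == set0) && owned_in Y i).
Proof.
rewrite exchange_big; apply: eq_bigr => i _ /=; rewrite /owned_in.
case: (A i :&: W0 == set0); last by rewrite big1.
case: (owner i) => [c|]; last by rewrite big1.
case: (boolP (c \in Y)) => [cY|cY]; last first.
  rewrite big1 // => d dY; rewrite (inj_eq Some_inj).
  by case: eqP => // cd; move: cY; rewrite cd dY.
rewrite (big_setD1 c cY) /= eqxx big1 // => d /setD1P[dc _].
by rewrite eq_sym (inj_eq Some_inj) (negbTE dc).
Qed.

Lemma owner_in i : if owner i is Some c then c \in A i :&: Wc else A i :&: Wc == set0.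
Proof. by rewrite /owner; case: pickP => [//|none]; apply/eqP/setP => c; rewrite in_set0 none. Qed.

Lemma cov_le_gain : cov A Wc <= cov A W0 + \sum_(c in Wc) gain c.
Proof.
rewrite !cov_sum sum_gain -big_split leq_sum // => i _ /=; rewrite /owned_in.
have := owner_in i; case: (owner i) => [c /setIP[_ cWc] | /eqP->]; last by rewrite eqxx.
by rewrite cWc andbT; case: (A i :&: W0 == set0); rewrite leq_b1.
Qed.

Lemma cov_gain_le (Y : {set C}) : cov A W0 + \sum_(c in Y) gain c <= cov A (W0 :|: Y).
Proof.
rewrite !cov_sum sum_gain -big_split leq_sum // => i _ /=; rewrite /owned_in setIUr.
case: (boolP (A i :&: W0 == set0)) => [/eqP-> | AiW0] /=; last first.
  by rewrite addn0 lt0b setU_eq0 negb_and AiW0.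
rewrite set0U add0n; have := owner_in i; case: (owner i) => // c /setIP[cAi _].
by case: (boolP (c \in Y)) => // cY; rewrite lt0b; apply/set0Pn; exists c; rewrite inE cAi.
Qed.

End MarginalCoverage.

End Committees.

Local Open Scope ring_scope.

Lemma price_step (R : realFieldType) (pay g l m n k c : R) :
  0 <= pay -> 0 <= n -> 0 < g -> l <= m -> pay * m * n <= c * k -> l * n <= g * k ->
  (pay + g^-1) * l * n <= (c + 1) * k.
Proof.
move=> pay_ge0 n_ge0 g_gt0 lem paid quota.
have share : g^-1 * l * n <= k by rewrite -mulrA ler_pdivrMl.
have old : pay * l * n <= pay * m * n by rewrite -!mulrA ler_wpM2l // ler_wpM2r.
by rewrite mulrDl mulrDl mulrDl mul1r lerD // (le_trans old).
Qed.

Section Greedy.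
Variables (R : realFieldType) (C : finType) (n : nat) (A : 'I_n -> {set C}) (k : nat).
Variable T : {set C}.
Hypothesis n_gt0 : (0 < n)%N.

Lemma card_deprived_le_score (W : {set C}) c l : (#|deprived A W c l| <= score A c)%N.
Proof. by apply/subset_leq_card/subsetP => i; rewrite !inE => /andP[]. Qed.

Lemma eligible_quota (W : {set C}) c l : eligible A k W c l -> (l * n <= score A c * k)%N.
Proof.
by case/andP=> _ quota; rewrite (leq_trans quota) // leq_mul2r card_deprived_le_score orbT.
Qed.

Lemma utility_U1 i c (W : {set C}) :
  c \notin W -> utility A i (c |: W) = ((c \in A i) + utility A i W)%N.
Proof. by move=> cW; rewrite !utility_sum big_setU1. Qed.

(* Invariant of the greedy rule run from T down to level l: voter i has paid pay i in total for
   cnt i of the added candidates, the last of them bought at level m i. *)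
Inductive priced (W : {set C}) (l : nat) : Prop :=
  Priced (pay : 'I_n -> R) (cnt m : 'I_n -> nat) of
    T \subset W &
    #|W|%:R = #|T|%:R + \sum_i pay i &
    (forall i, 0 <= pay i) &
    (forall i, cnt i = 0%N -> pay i = 0) &
    (forall i, (0 < cnt i)%N ->
       [/\ pay i * (m i)%:R * n%:R <= (cnt i)%:R * k%:R, (utility A i T + cnt i <= m i)%N,
           (l <= m i)%N & exists2 d, d \in W :\: T & (m i * n <= score A d * k)%N]) &
    (forall i, (utility A i T + cnt i <= utility A i W)%N) &
    (forall d, d \in W :\: T -> (n <= score A d * k)%N).

Lemma priced_added_quota (W : {set C}) l d :
  priced W l -> d \in W :\: T -> (n <= score A d * k)%N.
Proof. by case=> pay cnt m _ _ _ _ _ _; apply. Qed.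

Lemma priced_init : priced T k.
Proof.
apply: (@Priced _ _ (fun=> 0) (fun=> 0%N) (fun=> 0%N)) => //.
- by rewrite big1 ?addr0.
- by move=> i; rewrite addn0.
- by move=> d; rewrite setDv inE.
Qed.

Lemma priced_level_le (W : {set C}) l l' : (l' <= l)%N -> priced W l -> priced W l'.
Proof.
move=> le_l'l [pay cnt m TW sizeW pay_ge0 pay0 paid util added].
apply: (Priced (pay := pay) (cnt := cnt) (m := m)) => // i /paid[? ? lem ?].
by split=> //; apply: leq_trans lem.
Qed.

Lemma sum_indicator_card (G : {set 'I_n}) : \sum_i ((i \in G)%:R : R) = #|G|%:R.
Proof.
by rewrite -sum1_card natr_sum [RHS]big_mkcond; apply: eq_bigr => i _; case: (i \in G).
Qed.

Lemma priced_setU1 (W : {set C}) l c :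
  (0 < l)%N -> eligible A k W c l -> priced W l -> priced (c |: W) l.
Proof.
move=> l_gt0 elig [pay cnt m TW sizeW pay_ge0 pay0 paid util added].
have /andP[cW quota] := elig; set G := deprived A W c l in quota.
have G_gt0 : (0 < #|G|)%N.
  by rewrite lt0n; apply: contraTneq quota => ->; rewrite mul0n -ltnNge muln_gt0 l_gt0.
have cT : c \notin T by apply: contra cW; apply: (subsetP TW).
have inG i : i \in G = (c \in A i) && (utility A i W < l)%N by rewrite inE.
apply: (Priced (pay := fun i => pay i + (i \in G)%:R / #|G|%:R)
               (cnt := fun i => (cnt i + (i \in G))%N)
               (m := fun i => if i \in G then l else m i)).
- exact: subset_trans TW (subsetUr _ _).
- rewrite cardsU1 cW big_split /= -mulr_suml sum_indicator_card mulfV ?pnatr_eq0 -?lt0n //.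
  by rewrite add1n -addn1 natrD sizeW addrA.
- by move=> i; rewrite addr_ge0 ?divr_ge0.
- by move=> i /eqP; rewrite addn_eq0 eqb0 => /andP[/eqP/pay0 -> /negbTE ->]; rewrite mul0r addr0.
- move=> i; case iG: (i \in G); last first.
    rewrite addn0 mul0r addr0 => /paid[? ? ? [d dWT ?]]; split=> //.
    by exists d => //; move: dWT; rewrite !inE => /andP[-> ->]; rewrite orbT.
  move=> _; have /andP[ci poor] : (c \in A i) && (utility A i W < l)%N by rewrite -inG.
  split.
  + rewrite addn1 -natr1 div1r.
    have [/pay0 ->|/paid[paid_i _ lem _]] := posnP (cnt i).
      by apply: (price_step (m := l%:R)); rewrite ?mul0r ?mulr_ge0 ?ltr0n // -!natrM ler_nat.
    by apply: price_step paid_i _; rewrite ?ler0n ?ltr0n ?ler_nat // -!natrM ler_nat.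
  + by rewrite addn1 addnS (leq_ltn_trans (util i)).
  + by [].
  + by exists c; [rewrite !inE eqxx cT | exact: eligible_quota elig].
- by move=> i; rewrite utility_U1 // inG; case: (c \in A i) (util i) => /=; lia.
move=> d; rewrite !inE => /andP[dT /orP[/eqP-> | dW]]; last by apply: added; rewrite inE dT.
by rewrite (leq_trans _ (eligible_quota elig)) // leq_pmull.
Qed.

Lemma priced_saturate N (W : {set C}) l : (#|~: W| * k.+1 + l <= N)%N ->
  priced W l -> saturated A k W l -> exists W0, priced W0 0 /\ saturated A k W0 0.
Proof.
elim: N W l => [|N IHN] W [|l] sizeN prW satW; try by exists W.
  by rewrite addnS in sizeN.
have [c elig|none] := pickP (eligible A k W ^~ l.+1).
  have cW : c \in ~: W by rewrite inE; case/andP: elig.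
  have cardC : #|~: W| = (#|~: (c |: W)|).+1 by rewrite (cardsD1 c) cW setCU setIC -setDE.
  apply: (IHN (c |: W) l.+1); first by move: sizeN; rewrite cardC; lia.
    exact: priced_setU1.
  by apply: saturated_subset satW; apply: subsetUr.
apply: (IHN W l); [lia | exact: priced_level_le (leqnSn l) prW |].
move=> l' c ltll' lel'k; have [->|neq] := eqVneq l' l.+1; first by rewrite none.
by apply: satW; lia.
Qed.

Lemma exists_saturated_priced : exists W0, priced W0 0 /\ saturated A k W0 0.
Proof.
apply: (@priced_saturate (#|~: T| * k.+1 + k) T k) => //; first exact: priced_init.
by move=> l' c; lia.
Qed.

End Greedy.

Section Budget.
Variables (R : realFieldType) (C : finType) (n : nat) (A : 'I_n -> {set C}) (k : nat).
Variable T : {set C}.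
Hypothesis n_gt0 : (0 < n)%N.
Hypothesis topT : top_scored A T.
Hypothesis quotaT : forall c, c \in T -> (#|T| * n <= score A c * k)%N.

Definition T_share (i : 'I_n) : R := \sum_(j in A i :&: T) (score A j)%:R^-1.

Lemma sum_T_share : \sum_i T_share i = #|T|%:R.
Proof.
have score_gt0 j : j \in T -> (0 < score A j)%N.
  move=> jT; have := quotaT jT; rewrite lt0n; apply: contraTneq => ->.
  by rewrite mul0n -ltnNge muln_gt0 n_gt0 andbT; apply/card_gt0P; exists j.
rewrite (eq_bigr (fun i => \sum_(j in T) (j \in A i)%:R * (score A j)%:R^-1)); last first.
  move=> i _; rewrite /T_share big_mkcond [RHS]big_mkcond /=; apply: eq_bigr => j _.
  by rewrite inE; case: (j \in A i); case: (j \in T); rewrite ?mul1r ?mul0r.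
rewrite exchange_big /= -sumr_const; apply: eq_bigr => j jT.
by rewrite -mulr_suml -natr_sum -score_sum mulfV // pnatr_eq0 -lt0n score_gt0.
Qed.

Lemma T_share_le i l : (forall j, j \in T -> (l * n <= score A j * k)%N) ->
  T_share i * l%:R * n%:R <= (utility A i T)%:R * k%:R.
Proof.
move=> quota; rewrite /T_share -mulrA mulr_suml [X in _ <= X]mulr_natl -[X in _ <= X]sumr_const.
apply: ler_sum => j.
rewrite inE => /andP[_ /quota]; have [-> | score_gt0] := posnP (score A j).
  by rewrite invr0 mul0r.
by rewrite ler_pdivrMl ?ltr0n // -!natrM ler_nat.
Qed.

Section Spending.
Variables (W : {set C}) (pay : 'I_n -> R) (cnt m : 'I_n -> nat).
Hypothesis sizeW : #|W|%:R = #|T|%:R + \sum_i pay i.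
Hypothesis pay0 : forall i, cnt i = 0%N -> pay i = 0.
Hypothesis paid : forall i, (0 < cnt i)%N ->
  [/\ pay i * (m i)%:R * n%:R <= (cnt i)%:R * k%:R, (utility A i T + cnt i <= m i)%N,
      (0 <= m i)%N & exists2 d, d \in W :\: T & (m i * n <= score A d * k)%N].
Hypothesis util : forall i, (utility A i T + cnt i <= utility A i W)%N.

Lemma size_spending : #|W|%:R = \sum_i (T_share i + pay i).
Proof. by rewrite big_split /= sum_T_share sizeW. Qed.

Lemma utility_T_le_card i : (utility A i T <= #|T|)%N.
Proof. exact/subset_leq_card/subsetIr. Qed.

Lemma last_level_quota i : (0 < cnt i)%N -> forall j, j \in T -> (m i * n <= score A j * k)%N.
Proof.
case/paid=> _ _ _ [d /setDP[_ dT] quota_d] j jT.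
by rewrite (leq_trans quota_d) // leq_mul2r (top_scored_le topT jT dT) orbT.
Qed.

Lemma spending_le i : T_share i + pay i <= k%:R / n%:R.
Proof.
have nR : 0 < n%:R :> R by rewrite ltr0n.
have [cnt0|cnt_gt0] := posnP (cnt i).
  rewrite pay0 // addr0; have [T0|T_gt0] := posnP #|T|.
    by move/cards0_eq: T0 => T0; rewrite /T_share T0 setI0 big_set0 divr_ge0.
  rewrite ler_pdivlMr // -(@ler_pM2r _ #|T|%:R) ?ltr0n // mulrAC.
  by rewrite (le_trans (T_share_le _ quotaT)) // mulrC ler_wpM2l // ler_nat utility_T_le_card.
have [paid_i level _ _] := paid cnt_gt0.
have m_gt0 : (0 < m i)%N by apply: leq_trans level; rewrite addn_gt0 cnt_gt0 orbT.
rewrite ler_pdivlMr // -(@ler_pM2r _ (m i)%:R) ?ltr0n // mulrAC mulrDl mulrDl.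
apply: le_trans (lerD (T_share_le i (last_level_quota cnt_gt0)) paid_i) _.
by rewrite -mulrDl -natrD mulrC ler_wpM2l // ler_nat.
Qed.

Lemma spending_uncovered i : utility A i W = 0%N -> T_share i + pay i = 0.
Proof.
move=> uncovered; have := util i.
rewrite uncovered leqn0 addn_eq0 => /andP[/eqP/cards0_eq AiT0 /eqP cnt0].
by rewrite pay0 // addr0 /T_share AiT0 big_set0.
Qed.

Lemma pay_le_light i : (forall d, d \in W :\: T -> (score A d * k < #|T|.+1 * n)%N) ->
  pay i * #|T|%:R * n%:R <= (#|T| - utility A i T)%:R * k%:R.
Proof.
move=> small; have [cnt0|cnt_gt0] := posnP (cnt i).
  by rewrite pay0 // !mul0r mulr_ge0.
have [paid_i level _ [d dWT quota_d]] := paid cnt_gt0.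
have m_le_T : (m i <= #|T|)%N.
  by rewrite -ltnS -(ltn_pmul2r n_gt0) (leq_ltn_trans quota_d) ?small.
have m_gt0 : (0 < m i)%N by apply: leq_trans level; rewrite addn_gt0 cnt_gt0 orbT.
have levels : (#|T| * cnt i <= m i * (#|T| - utility A i T))%N by nia.
rewrite -(@ler_pM2l _ (m i)%:R) ?ltr0n //.
have -> : (m i)%:R * (pay i * #|T|%:R * n%:R) = #|T|%:R * (pay i * (m i)%:R * n%:R) by ring.
apply: le_trans (ler_wpM2l (ler0n _ _) paid_i) _.
by rewrite !mulrA -!natrM ler_nat leq_mul2r levels orbT.
Qed.

End Spending.

Lemma priced_size_le W : priced R A k T W 0 -> (#|W| <= k)%N.
Proof.
case=> pay cnt m _ sizeW _ pay0 paid _ _.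
rewrite -(ler_nat R) (size_spending sizeW).
apply: le_trans (ler_sum _ (fun i _ => spending_le pay0 paid i)) _.
by rewrite sumr_const card_ord -[_ *+ n]mulr_natr divfK // pnatr_eq0 -lt0n.
Qed.

Lemma priced_cov W : priced R A k T W 0 -> (#|W| * n <= cov A W * k)%N.
Proof.
case=> pay cnt m _ sizeW _ pay0 paid util _.
have nR : 0 < n%:R :> R by rewrite ltr0n.
rewrite -(ler_nat R) !natrM -ler_pdivlMr // -mulrA (size_spending sizeW).
rewrite (bigID (fun i => i \in [set i | A i :&: W != set0])) /=.
rewrite [X in _ + X]big1 ?addr0 => [|i]; last first.
  rewrite inE negbK => /eqP AiW0.
  by apply: (spending_uncovered pay0 util); rewrite /utility AiW0 cards0.
by rewrite /cov mulr_natl -sumr_const ler_sum // => i _; apply: spending_le pay0 paid i.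
Qed.

Lemma priced_added_small W s : priced R A k T W 0 -> (0 < #|T|)%N ->
  (forall d, d \in W :\: T -> (score A d * k < #|T|.+1 * n)%N) ->
  (forall j, j \in T -> (s <= score A j)%N) -> (#|W :\: T| * n + s * k <= k * n)%N.
Proof.
case=> pay cnt m TW sizeW _ pay0 paid util _ T_gt0 small s_le.
have sizeWT : #|W :\: T|%:R = \sum_i pay i :> R.
  by apply: (addrI #|T|%:R); rewrite -sizeW -natrD cardsD (setIidPr TW) subnKC ?subset_leq_card.
have paying : (#|W :\: T| * #|T| * n <= \sum_i (#|T| - utility A i T) * k)%N.
  rewrite -(ler_nat R) natr_sum !natrM sizeWT !mulr_suml.
  by apply: ler_sum => i _; rewrite natrM; exact: pay_le_light pay0 paid i small.
have sumB : (\sum_i (#|T| - utility A i T) = n * #|T| - sw A T)%N.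
  by rewrite sumnB ?sum_nat_const ?card_ord // => i _; apply: utility_T_le_card.
have swT : (#|T| * s <= sw A T)%N.
  by rewrite sw_score_sum -sum_nat_const leq_sum.
have s_le_n : (s <= n)%N.
  by have [j jT] := card_gt0P T_gt0; rewrite (leq_trans (s_le j jT)) ?score_le_n.
rewrite -(leq_pmul2l T_gt0); move: paying; rewrite -big_distrl /= sumB; nia.
Qed.

Hypothesis T_le_k : (#|T| <= k)%N.
Hypothesis T_maximal : (#|T| < k)%N -> forall c, c \notin T -> (score A c * k < #|T|.+1 * n)%N.

Lemma priced_light_added W c : priced R A k T W 0 -> c \notin W ->
  (#|[set d in W :\: T | score A d < score A c]| * n + score A c * k <= k * n)%N.
Proof.
move=> prW cW; have TW : T \subset W by case: prW.
have cT : c \notin T by apply: contra cW; apply: (subsetP TW).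
set s := score A c; set X := [set d in W :\: T | _].
have XW : X \subset W :\: T by apply/subsetP => d; rewrite inE => /andP[].
have sizeW : (#|W :\: T| + #|T| <= k)%N.
  by rewrite cardsD (setIidPr TW) subnK ?subset_leq_card ?(priced_size_le prW).
have sizeWn : (#|W :\: T| * n + #|T| * n <= k * n)%N by rewrite -mulnDl leq_mul2r sizeW orbT.
have XWn : (#|X| * n <= #|W :\: T| * n)%N by rewrite leq_mul2r subset_leq_card ?orbT.
have [sk_le|sk_gt] := leqP (s * k) (#|T| * n); first by lia.
have [T_lt_k|T_eq_k] := ltnP #|T| k; last first.
  have X0 : #|X| = 0%N by move: (subset_leq_card XW); lia.
  by rewrite X0 mul0n add0n mulnC leq_mul2l score_le_n orbT.
have sk_lt : (s * k < n + #|T| * n)%N by rewrite -mulSn; apply: T_maximal.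
have [/exists_inP[d dWT heavy_d] | /exists_inPn light] :=
  boolP [exists d in W :\: T, s <= score A d]%N.
  have ltXW : (#|X| < #|W :\: T|)%N.
    by apply/proper_card/properP; split=> //; exists d; rewrite // inE dWT -leqNgt.
  by have := leq_mul ltXW (leqnn n); rewrite mulSn; lia.
have XE : X = W :\: T by apply/setP => d; rewrite inE andb_idr // => /light; rewrite -ltnNge.
have [T0|T_gt0] := posnP #|T|.
  suff -> : #|X| = 0%N by move: sk_lt; rewrite T0; nia.
  apply/eqP; rewrite cards_eq0 -subset0 XE; apply/subsetP => d dWT.
  have := priced_added_quota prW dWT; have := light d dWT.
  by rewrite -ltnNge -(ltn_pmul2r (leq_ltn_trans (leq0n _) T_lt_k)); move: sk_lt; rewrite T0; lia.
rewrite XE; apply: priced_added_small prW T_gt0 _ _ => [d dWT|j jT].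
  by rewrite (leq_ltn_trans _ sk_lt) // leq_mul2r ltnW ?orbT // ltnNge light.
exact: top_scored_le topT jT cT.
Qed.

End Budget.

Section Inequalities.
Variable R : realFieldType.

(* M: optimal welfare; P, L: welfare of the members scoring at least, resp. below, the best
   unelected score s; x: number of the latter; q = sqrt k. *)
Lemma welfare_tradeoff (k n s x P L M q : R) :
  1 <= k -> 0 < n -> 0 <= s -> 0 <= x -> 0 < q -> q * q = k ->
  M <= P + x * s -> (k - x) * s <= P -> x * n <= L * k ->
  x * n + s * k <= k * n -> (x = 0 \/ n < s * k) ->
  (2 / q - 1 / k) * M <= P + L.
Proof.
move=> k_ge1 n_gt0 s_ge0 x_ge0 q_gt0 qq_k optM heavyP lightL light_size light_case.
have k_gt0 : 0 < k by lra.
have q_ge1 : 1 <= q by nra.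
have -> : 2 / q - 1 / k = (2 * q - 1) / k by rewrite -qq_k; field; rewrite gt_eqF.
apply: le_trans (ler_wpM2l _ optM) _; first by rewrite divr_ge0 ?ltW //; lra.
rewrite mulrAC ler_pdivrMr //.
have key : (2 * q - 1) * k * s <= (k - x) * s * k + x * n.
  case: light_case => [x0 | lt_n_sk].
    have ks_ge0 : 0 <= k * s by rewrite mulr_ge0 // ltW.
    have : 2 * q - 1 <= k by rewrite -qq_k; nra.
    by rewrite x0 !mul0r subr0 addr0; nra.
  have sq : 0 <= (n - q * s) * (n - q * s) by rewrite -expr2 sqr_ge0.
  have : x * (s * k - n) * n <= (k * n - s * k) * (s * k - n) by nra.
  by move=> ?; rewrite -(ler_pM2l n_gt0); nra.
have : (k - 2 * q + 1) * ((k - x) * s) <= (k - 2 * q + 1) * P.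
  by apply: ler_wpM2l => //; rewrite -qq_k; nra.
nra.
Qed.

(* M: optimal coverage; w, c: size and coverage of the core; X, S: voters newly covered by an
   optimal committee, resp. by the t seats filled from it; r: seats given to welfare. *)
Lemma coverage_tradeoff (k n c X S M w r t q : R) :
  0 < q -> q * q = k -> 0 < n -> 0 <= c -> 0 <= X -> 0 <= w -> 0 <= r -> 0 <= t ->
  w + r + t = k -> r <= 2 * q -> w * n <= c * k -> c + X <= n ->
  t * X <= k * S -> M <= c + X -> 0 <= M ->
  (3 / 4 - 2 / q) * M <= c + S.
Proof.
move=> q_gt0 qq_k n_gt0 c_ge0 X_ge0 w_ge0 r_ge0 t_ge0 sum_k le_r2q wcov cXn tXS optM M_ge0.
have k_gt0 : 0 < k by rewrite -qq_k mulr_gt0.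
have S_ge0 : 0 <= S by rewrite -(pmulr_rge0 _ k_gt0) (le_trans _ tXS) ?mulr_ge0.
have [b_le0|b_gt0] := lerP (3 / 4 - 2 / q) 0.
  by rewrite (le_trans (mulr_le0_ge0 b_le0 M_ge0)) ?addr_ge0.
set b := 3 / 4 - 2 / q in b_gt0 *.
have kbE : k * b = 3 / 4 * k - 2 * q by rewrite /b mulrBr -qq_k; field; rewrite gt_eqF.
have kb_le_k : k * b <= k by rewrite kbE; nra.
have tE : t = k - w - r by rewrite -sum_k; ring.
have main : k * (b * (c + X)) <= k * c + t * X.
  rewrite mulrA kbE; have [kb_le_t|t_lt_kb] := lerP (3 / 4 * k - 2 * q) t.
    have e1 : 0 <= (t - (3 / 4 * k - 2 * q)) * X by apply: mulr_ge0 => //; lra.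
    have e2 : 0 <= (k - (3 / 4 * k - 2 * q)) * c by apply: mulr_ge0 => //; rewrite -kbE; lra.
    lra.
  have e1 : 0 <= k * (((3 / 4 * k - 2 * q) - t) * (n - c - X)).
    by apply: mulr_ge0; [lra | apply: mulr_ge0; lra].
  have e2 : 0 <= (k - t) * (c * k - w * n) by apply: mulr_ge0; lra.
  have e3 : 0 <= n * ((w - k / 2) * (w - k / 2) + r * w + k * (2 * q - r)).
    apply: mulr_ge0; first exact: ltW.
    rewrite -expr2 !addr_ge0 ?sqr_ge0 ?mulr_ge0 //; lra.
  rewrite tE in e1 e2 *; nra.
apply: le_trans (ler_wpM2l (ltW b_gt0) optM) _.
by rewrite -(ler_pM2l k_gt0) (le_trans main) // mulrDr lerD2l.
Qed.

End Inequalities.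

Lemma ratio_ge (R : numFieldType) (a b : nat) (x : R) :
  x <= 1 -> x * b%:R <= a%:R -> x <= Defs.ratio R a b.
Proof. by rewrite /Defs.ratio; case: eqP => // /eqP b0 _; rewrite ler_pdivlMr // ltr0n lt0n. Qed.

Definition repr_bound (R : rcfType) (k : nat) : R := 3%:R / 4%:R - 2%:R / Num.sqrt k%:R.
Definition util_bound (R : rcfType) (k : nat) : R := 2%:R / Num.sqrt k%:R - 1 / k%:R.

Section Bounds.
Variables (R : rcfType) (k : nat).
Hypothesis k_gt0 : (0 < k)%N.

Lemma sqrt_nat_gt0 : 0 < Num.sqrt k%:R :> R.
Proof. by rewrite sqrtr_gt0 ltr0n. Qed.

Lemma sqrt_nat_sqr : Num.sqrt k%:R * Num.sqrt k%:R = k%:R :> R.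
Proof. by rewrite -expr2 sqr_sqrtr ?ler0n. Qed.

Lemma util_boundE : util_bound R k = (2 * Num.sqrt k%:R - 1) / k%:R.
Proof.
have := sqrt_nat_sqr; have := sqrt_nat_gt0; rewrite /util_bound.
by set q := Num.sqrt _ => q_gt0 <-; field; rewrite gt_eqF.
Qed.

Lemma repr_bound_mulE : repr_bound R k * k%:R = 3 / 4 * k%:R - 2 * Num.sqrt k%:R.
Proof.
have := sqrt_nat_sqr; have := sqrt_nat_gt0; rewrite /repr_bound.
by set q := Num.sqrt _ => q_gt0 <-; field; rewrite gt_eqF.
Qed.

Lemma util_bound_le1 : util_bound R k <= 1.
Proof.
rewrite util_boundE ler_pdivrMr ?ltr0n // mul1r; have := sqrt_nat_sqr.
by set q := Num.sqrt _ => <-; have := sqr_ge0 (q - 1); rewrite expr2; nra.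
Qed.

Lemma repr_bound_le1 : repr_bound R k <= 1.
Proof.
have : 0 <= 2%:R / Num.sqrt k%:R :> R by rewrite divr_ge0 ?ltW ?sqrt_nat_gt0.
by rewrite /repr_bound; lra.
Qed.

End Bounds.

Section FillWelfare.
Variables (R : rcfType) (C : finType) (n : nat) (A : 'I_n -> {set C}) (k : nat).
Variables (T W0 : {set C}).
Hypotheses (n_gt0 : (0 < n)%N) (k_gt0 : (0 < k)%N).
Hypothesis topT : top_scored A T.
Hypothesis quotaT : forall c, c \in T -> (#|T| * n <= score A c * k)%N.
Hypothesis T_le_k : (#|T| <= k)%N.
Hypothesis T_maximal : (#|T| < k)%N -> forall c, c \notin T -> (score A c * k < #|T|.+1 * n)%N.
Hypothesis prW0 : priced R A k T W0 0.

Lemma fill_light_added (W : {set C}) c d : W0 \subset W -> score_fill A W0 W ->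
  c \notin W -> d \in W -> (score A d < score A c)%N -> d \in W0 :\: T.
Proof.
move=> W0W fill cW dW lt_dc; have TW0 : T \subset W0 by case: prW0.
have dW0 : d \in W0 by apply: contraLR lt_dc => dW0; rewrite -leqNgt fill // inE dW0.
rewrite inE dW0 andbT; apply: contraTN lt_dc => dT; rewrite -leqNgt (top_scored_le topT dT) //.
by apply: contra cW; apply/subsetP/(subset_trans TW0 W0W).
Qed.

Lemma fill_welfare (W : {set C}) : W0 \subset W -> #|W| = k -> score_fill A W0 W ->
  util_bound R k * (max_sw A k)%:R <= (sw A W)%:R.
Proof.
move=> W0W sizeW fill.
have [c0 c0W|full] := pickP [predC W]; last first.
  have opt : (max_sw A k <= sw A W)%N.
    apply/bigmax_leqP => W' _; apply/subset_leq_sw/subsetP => c _.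
    by have := full c; rewrite inE => /negbFE.
  by rewrite (le_trans (ler_wpM2r (ler0n _ _) (util_bound_le1 R k_gt0))) ?mul1r ?ler_nat.
have [cs csW cs_max] := arg_maxnP (score A) c0W; rewrite inE in csW.
set s := score A cs; set B := [set d in W | s <= score A d]%N.
have light_added d : d \in W :\: B -> d \in W0 :\: T /\ (score A d < s)%N.
  case/setDP=> dW; rewrite inE dW /= -ltnNge => lt_ds.
  by split=> //; apply: fill_light_added W0W fill csW dW lt_ds.
have BW : B \subset W by apply/subsetP => d; rewrite inE => /andP[].
have sizeB : (#|B| + #|W :\: B| = k)%N by rewrite -sizeW -(cardsID B W) (setIidPr BW).
have optM : (max_sw A k <= \sum_(d in B) score A d + #|W :\: B| * s)%N.
  have le_Bk : (#|B| <= k)%N by rewrite -sizeW subset_leq_card.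
  rewrite -[#|W :\: B|](addKn #|B|) sizeB; apply: max_sw_le_threshold le_Bk _ _ => [d|c cB].
    by rewrite inE => /andP[].
  have [cW|/cs_max //] := boolP (c \in W).
  by have [_ /ltnW] := light_added c ltac:(by rewrite inE cB).
have heavyP : (#|B| * s <= \sum_(d in B) score A d)%N.
  by rewrite -sum_nat_const leq_sum // => d; rewrite inE => /andP[].
have light_size : (#|W :\: B| * n + s * k <= k * n)%N.
  have csW0 : cs \notin W0 by apply: contra csW; apply/subsetP.
  apply: leq_trans (priced_light_added n_gt0 topT quotaT T_le_k T_maximal prW0 csW0).
  rewrite leq_add2r leq_mul2r subset_leq_card ?orbT //.
  by apply/subsetP => d /light_added[? ?]; rewrite inE; apply/andP.
have lightL : (#|W :\: B| * n <= (\sum_(d in W :\: B) score A d) * k)%N.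
  rewrite -sum_nat_const big_distrl leq_sum // => d /light_added[dW0T _].
  exact: priced_added_quota prW0 dW0T.
have light_case : #|W :\: B| = 0%N \/ (n < s * k)%N.
  have [|/card_gt0P[d dWB]] := posnP #|W :\: B|; [by left | right].
  have [dW0T lt_ds] := light_added d dWB.
  by rewrite (leq_ltn_trans (priced_added_quota prW0 dW0T)) // ltn_mul2r k_gt0.
rewrite sw_score_sum (big_setID B) /= (setIidPr BW) natrD.
apply: (@welfare_tradeoff _ k%:R n%:R s%:R #|W :\: B|%:R);
  rewrite ?ler0n ?ltr0n ?sqrt_nat_gt0 ?sqrt_nat_sqr //.
- by rewrite ler1n.
- by rewrite -natrM -natrD ler_nat.
- by rewrite -sizeB natrD addrK -natrM ler_nat.
- by rewrite -!natrM ler_nat.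
- by rewrite -!natrM -natrD ler_nat.
- by case: light_case => [->|lt_nsk]; [left | right; rewrite -natrM ltr_nat].
Qed.

End FillWelfare.

Lemma exists_floor_double_sqrt (R : rcfType) (k : nat) :
  exists r : nat, r%:R <= 2 * (Num.sqrt k%:R : R) < r%:R + 1.
Proof.
have [r /andP[sq_le lt_sq]] : exists r, (r * r <= 4 * k < r.+1 * r.+1)%N.
  have ex0 : exists r, (r * r <= 4 * k)%N by exists 0%N.
  have ub r : (r * r <= 4 * k -> r <= 4 * k)%N by nia.
  have [r sq_le r_max] := ex_maxnP ex0 ub.
  by exists r; rewrite sq_le /= ltnNge; apply/negP => /r_max; lia.
exists r; set q := Num.sqrt k%:R.
have q_ge0 : 0 <= q by apply: sqrtr_ge0.
have qq : q * q = k%:R by rewrite -expr2 sqr_sqrtr ?ler0n.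
have r_ge0 : 0 <= r%:R :> R by apply: ler0n.
move: sq_le lt_sq; rewrite -(ler_nat R) -(ltr_nat R) -[r.+1]addn1 !natrM natrD -qq.
by move=> sq_le lt_sq; apply/andP; split; nra.
Qed.

Definition tradeoff_committee (R : rcfType) (C : finType) (n : nat) (A : 'I_n -> {set C})
    (k : nat) (W : {set C}) : Prop :=
  [/\ (#|W| <= k)%N, EJRplus A k W,
      repr_bound R k <= repr_ratio R A k W & util_bound R k <= util_ratio R A k W].

Section Completion.
Variables (R : rcfType) (C : finType) (n : nat) (A : 'I_n -> {set C}) (k : nat) (W0 : {set C}).
Hypotheses (n_gt0 : (0 < n)%N) (k_gt0 : (0 < k)%N) (le_kC : (k <= #|C|)%N).
Hypothesis W0_le_k : (#|W0| <= k)%N.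
Hypothesis W0_cov : (#|W0| * n <= cov A W0 * k)%N.
Hypothesis W0_EJRplus : forall W : {set C}, W0 \subset W -> EJRplus A k W.
Hypothesis W0_fill : forall W : {set C}, W0 \subset W -> #|W| = k -> score_fill A W0 W ->
  util_bound R k * (max_sw A k)%:R <= (sw A W)%:R.

Lemma large_core_committee : repr_bound R k * k%:R <= #|W0|%:R ->
  exists W, tradeoff_committee R A k W.
Proof.
move=> large; have [W [W0W sizeW fillW]] := exists_score_fill A W0_le_k le_kC.
exists W; split; [by rewrite sizeW | exact: W0_EJRplus | |].
  apply: ratio_ge; first exact: repr_bound_le1.
  have [b_le0|b_gt0] := lerP (repr_bound R k) 0.
    by rewrite (le_trans (mulr_le0_ge0 b_le0 (ler0n _ _))).
  have kR : 0 < k%:R :> R by rewrite ltr0n.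
  rewrite (le_trans (ler_wpM2l (ltW b_gt0) (_ : _ <= n%:R))) ?ler_nat ?max_cov_le_n //.
  rewrite -(ler_pM2r kR) mulrAC (le_trans (ler_wpM2r (ler0n _ _) large)) //.
  by rewrite -!natrM ler_nat (leq_trans W0_cov) // leq_mul2r subset_leq_cov ?orbT.
apply: ratio_ge; [exact: util_bound_le1 | exact: W0_fill].
Qed.

Lemma exists_coverage_completion r t : (#|W0| + r + t)%N = k ->
  r%:R <= 2 * Num.sqrt k%:R :> R ->
  exists2 Y : {set C}, #|Y| = t & repr_bound R k * (max_cov A k)%:R <= (cov A (W0 :|: Y))%:R.
Proof.
move=> sum_k le_r; have [Wc sizeWc optWc] := exists_optimal_committee (cov A) le_kC.
have [Y [_ sizeY heavyY]] := @exists_heavy_subset _ (gain A W0 Wc) Wc t ltac:(lia).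
exists Y => //; set X := \sum_(c in Wc) gain A W0 Wc c.
apply: le_trans (_ : _ <= (cov A W0 + \sum_(c in Y) gain A W0 Wc c)%:R) _; last first.
  by rewrite ler_nat cov_gain_le.
rewrite natrD; apply: (@coverage_tradeoff _ k%:R n%:R _ X%:R _ _ #|W0|%:R r%:R t%:R);
  rewrite ?ler0n ?ltr0n ?sqrt_nat_gt0 ?sqrt_nat_sqr //.
- by rewrite -!natrD sum_k.
- by rewrite -!natrM ler_nat.
- by rewrite -natrD ler_nat (leq_trans (cov_gain_le _ _ _ _)) ?cov_le_n.
- by rewrite -!natrM ler_nat -sizeWc.
- by rewrite /max_cov optWc -natrD ler_nat cov_le_gain.
Qed.

Lemma small_core_committee : #|W0|%:R < repr_bound R k * k%:R ->
  exists W, tradeoff_committee R A k W.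
Proof.
move=> small; have [r /andP[le_r lt_r]] := exists_floor_double_sqrt R k.
have kR : 0 < k%:R :> R by rewrite ltr0n.
have le_W0r_k : (#|W0| + r <= k)%N.
  by rewrite -(ler_nat R) natrD; move: small; rewrite repr_bound_mulE //; lra.
have [U sizeU welfareU] := exists_welfare_subset A (leq_trans (leq_addl _ _) le_W0r_k) le_kC.
have [Y sizeY coverageY] := exists_coverage_completion (subnKC le_W0r_k) le_r.
exists (W0 :|: Y :|: U); split.
- rewrite (leq_trans (leq_card_setU _ _)) // (leq_trans (leq_add (leq_card_setU _ _) (leqnn _))) //.
  by rewrite sizeY sizeU addnAC subnKC.
- by apply: W0_EJRplus; rewrite -setUA subsetUl.
- apply: ratio_ge; first exact: repr_bound_le1.
  by rewrite (le_trans coverageY) // ler_nat subset_leq_cov ?subsetUl.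
apply: ratio_ge; first exact: util_bound_le1.
rewrite (le_trans _ (_ : (sw A U)%:R <= _)) ?ler_nat ?subset_leq_sw ?subsetUr //.
rewrite util_boundE // mulrAC ler_pdivrMr // mulrC.
apply: le_trans (_ : (max_sw A k)%:R * r%:R <= _); first by rewrite ler_wpM2l ?ler0n //; lra.
by rewrite -!natrM ler_nat mulnC [(sw A U * k)%N]mulnC.
Qed.

End Completion.

Lemma exists_EJRplus_core (R : rcfType) (C : finType) (n : nat) (A : 'I_n -> {set C}) (k : nat) :
  (0 < n)%N -> (0 < k)%N -> exists W0 : {set C},
  [/\ (#|W0| <= k)%N, (#|W0| * n <= cov A W0 * k)%N,
      forall W : {set C}, W0 \subset W -> EJRplus A k W &
      forall W : {set C}, W0 \subset W -> #|W| = k -> score_fill A W0 W ->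
        util_bound R k * (max_sw A k)%:R <= (sw A W)%:R].
Proof.
move=> n_gt0 k_gt0; have [T [T_le_k topT quotaT T_maximal]] := exists_maximal_quota_block A k.
have [W0 [prW0 satW0]] := exists_saturated_priced R A k T n_gt0.
exists W0; split.
- exact: (priced_size_le (R := R) n_gt0 topT quotaT prW0).
- exact: (priced_cov (R := R) n_gt0 topT quotaT prW0).
- by move=> W W0W; apply/saturated0_EJRplus/(saturated_subset W0W).
- exact: fill_welfare n_gt0 k_gt0 topT quotaT T_le_k T_maximal prW0.
Qed.

Theorem theorem7 (R : rcfType) (C : finType) (n : nat) (A : 'I_n -> {set C}) (k : nat) :
  (0 < n)%N -> (1 <= k <= #|C|)%N ->
  exists W : {set C},
    [/\ (#|W| <= k)%N,
        EJRplus A k W,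
        repr_ratio R A k W >= 3%:R / 4%:R - 2%:R / Num.sqrt (k%:R) &
        util_ratio R A k W >= 2%:R / Num.sqrt (k%:R) - 1 / k%:R].
Proof.
move=> n_gt0 /andP[k_gt0 le_kC].
have [W0 [W0_le_k W0_cov W0_EJRplus W0_fill]] := exists_EJRplus_core R A n_gt0 k_gt0.
have [large | small] := lerP (repr_bound R k * k%:R) #|W0|%:R.
- exact: large_core_committee W0_EJRplus W0_fill large.
- exact: small_core_committee W0_EJRplus small.
Qed.
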